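(* Let $I$ be a finite set, $n\in\{1,\dots,|I|\}$, and $\bar J_n$ a set of $n$-element subsets of $I$. Samples are bit strings $o=(o_i)_{i\in I}\in\{0,1\}^I$; a set $j\in\bar J_n$ is activated by $o$ if $o_i=1$ for all $i\in j$. For $F\subset\bar J_n$ let $\mathbb 1_F:\{0,1\}^I\to\{0,1\}$ be given by $\mathbb 1_F(o)=1$ iff some $j\in F$ is activated by $o$, and let $\mathcal H:=\{\mathbb 1_F: F\subset\bar J_n\}$. Then the Vapnik–Chervonenkis dimension of $\mathcal H$ is $\operatorname{VCdim}(\mathcal H)=|\bar J_n|$.
   Context: The VC-dimension of a class of $\{0,1\}$-valued functions is the largest cardinality of a set of points on which the class realizes all possible labelings (that it shatters). *)

From mathcomp Require Import all_boot.
Set Implicit Arguments. Unset Strict Implicit. Unset Printing Implicit Defensive.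

Definition shatters (X : finType) (H : (X -> bool) -> Prop) (S : {set X}) : Prop :=
  forall lab : X -> bool, exists h, H h /\ forall x, x \in S -> h x = lab x.

Definition VCdim_eq (X : finType) (H : (X -> bool) -> Prop) (d : nat) : Prop :=
  (exists S : {set X}, shatters H S /\ #|S| = d) /\
  (forall S : {set X}, shatters H S -> #|S| <= d).

Definition sample (I : finType) := {ffun I -> bool}.

Definition activated (I : finType) (o : sample I) (j : {set I}) : bool :=
  [forall i in j, o i].

Definition ind (I : finType) (F : {set {set I}}) (o : sample I) : bool :=
  [exists j in F, activated o j].

Definition Hclass (I : finType) (Jn : {set {set I}}) (h : sample I -> bool) : Prop :=
  exists F : {set {set I}}, F \subset Jn /\ forall o, h o = ind F o.

From mathcomp Require Import all_boot.

(* Lower bound: the indicator samples of the members of Jn are shattered,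
   because a sample of the form 1_k activates j in Jn only when j = k, all
   members of Jn having the same size.  Upper bound: H has at most
   2^|Jn| members, one per subset F of Jn, while a shattered set S needs
   2^|S| distinct restrictions. *)

Set Implicit Arguments. Unset Strict Implicit. Unset Printing Implicit Defensive.

Lemma shatters_card_le (X T : finType) (H : (X -> bool) -> Prop)
    (g : T -> X -> bool) (D : {set T}) (S : {set X}) :
  (forall h, H h -> exists2 t, t \in D & forall x, h x = g t x) ->
  shatters H S -> 2 ^ #|S| <= #|D|.
Proof.
move=> H_D shS.
pose realizes (A : {set X}) t := (t \in D) && [forall x in S, g t x == (x \in A)].
have realizesP A : exists t, realizes A t.
  have [h [/H_D [t tD h_g] h_A]] := shS (mem A).
  exists t; rewrite /realizes tD; apply/forallP => x; apply/implyP => xS.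
  by rewrite -h_g h_A.
pose f A := xchoose (realizesP A).
have fD A : f A \in D by case/andP: (xchooseP (realizesP A)).
have f_S A : [forall x in S, g (f A) x == (x \in A)].
  by case/andP: (xchooseP (realizesP A)).
have f_inj : {in powerset S &, injective f}.
  move=> A B; rewrite !inE => /subsetP AS /subsetP BS fAB.
  apply/setP => x; have [xS | xNS] := boolP (x \in S).
    have := forallP (f_S A) x; have := forallP (f_S B) x.
    by rewrite xS fAB /= => /eqP -> /eqP ->.
  by apply/idP/idP => [/AS | /BS]; rewrite (negPf xNS).
rewrite -card_powerset -(card_in_imset f_inj); apply: subset_leq_card.
by apply/subsetP => _ /imsetP [A _ ->]; exact: fD.
Qed.

Definition sample_of {I : finType} (k : {set I}) : sample I := [ffun i => i \in k].

Lemma sample_of_inj (I : finType) : injective (@sample_of I).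
Proof.
by move=> j k /ffunP jk; apply/setP => i; have := jk i; rewrite !ffunE.
Qed.

Lemma activated_sample_of (I : finType) (j k : {set I}) :
  activated (sample_of k) j = (j \subset k).
Proof.
by apply/forallP/subsetP => [act i /(implyP (act i)) | jk i];
  rewrite ?ffunE //; apply/implyP => /jk.
Qed.

Lemma ind_sample_of (I : finType) (F : {set {set I}}) (k : {set I}) :
  {in F, forall j : {set I}, #|k| <= #|j|} -> ind F (sample_of k) = (k \in F).
Proof.
move=> k_min; apply/existsP/idP => [[j /andP [jF]] | kF].
  rewrite activated_sample_of => jk.
  have /eqP <- // : j == k by rewrite eqEcard jk k_min.
by exists k; rewrite kF activated_sample_of subxx.
Qed.

Lemma shatters_samples (I : finType) (Jn : {set {set I}}) (n : nat) :
  {in Jn, forall j : {set I}, #|j| = n} -> shatters (Hclass Jn) (sample_of @: Jn).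
Proof.
move=> Jn_n lab; pose F := [set j in Jn | lab (sample_of j)].
have FJn : F \subset Jn by apply/subsetP => j; rewrite inE => /andP [].
exists (ind F); split; first by exists F.
move=> _ /imsetP [k kJn ->].
rewrite ind_sample_of ?inE ?kJn // => j /(subsetP FJn) jJn.
by rewrite !Jn_n.
Qed.

Theorem proposition14 (I : finType) (n : nat) (Jn : {set {set I}})
  (hn1 : 1 <= n) (hnI : n <= #|I|)
  (hJ : forall j, j \in Jn -> #|j| = n) :
  VCdim_eq (Hclass Jn) #|Jn|.
Proof.
split.
  exists (sample_of @: Jn); split; first exact: shatters_samples hJ.
  by rewrite card_imset //; apply: sample_of_inj.
move=> S shS; rewrite -(leq_exp2l _ _ (ltnSn 1)) -(card_powerset Jn).
apply: (shatters_card_le (g := @ind I) _ shS) => h [F [FJn h_F]].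
by exists F; rewrite ?inE.
Qed.
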